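(* Let $\mathcal{P}$ be a filtered meet-semilattice and $F\colon\mathcal{P}\to\mathrm{SSets}$ a weak Mackey functor with a quasi-unit. Then $F$ is cofibrant, i.e. the natural map of simplicial sets $\operatorname{colim}_{\mathcal{P}_{<i}}F\to F(i)$ is (degreewise) injective for every $i\in\mathcal{P}$.
   Context: A filtered meet-semilattice is a poset in which any two elements $j,k$ have a meet $j\wedge k$, equipped with $d\colon\mathcal{P}\to\mathbb{N}$ with $d(i)<d(j)$ whenever $i<j$. (Cofibrant refers to the Reedy model structure on $\operatorname{Fun}(\mathcal{P},\mathrm{SSets})$, in which a functor is cofibrant exactly when these natural maps are injective.) $F(j<i)$ is the image of the arrow $j\to i$; $F(i<i)$ and $G(i<i)$ are identities. A weak Mackey functor $F\colon\mathcal{P}\to\mathrm{SSets}$ is a covariant functor with maps $G(j<i)\colon F(i)\to F(j)$ for $j<i$ such that for all $j<i,k<i$ there are $\alpha(i,j,k)\in\operatorname{End}(F(j))$, $\beta(i,j,k)\in\operatorname{End}(F(k\wedge j))$ with $G(j<i)\circ F(k<i)=\alpha(i,j,k)\circ F(k\wedge j<j)\circ G(k\wedge j<k)=F(k\wedge j<j)\circ\beta(i,j,k)\circ G(k\wedge j<k)$; it has a quasi-unit if $\alpha(i,j,j)$ is an automorphism of $F(j)$ for all $j<i$. *)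

From HB Require Import structures.
From mathcomp Require Import all_boot all_order.
From Stdlib Require Import Relations.
Set Implicit Arguments. Unset Strict Implicit. Unset Printing Implicit Defensive.
Import Order.Theory.
Local Open Scope order_scope.

(* face n i : X_(n+1) -> X_n for 0 <= i <= n+1, degen n i : X_n -> X_(n+1) for 0 <= i <= n.
   Out-of-range indices are irrelevant (no condition is imposed on them). *)
Record SSet := {
  sobj :> nat -> Type;
  face : forall n : nat, nat -> sobj n.+1 -> sobj n;
  degen : forall n : nat, nat -> sobj n -> sobj n.+1;
  face_face : forall n i j x, (i < j)%N -> (j <= n.+2)%N ->
     face i (face j x) = face j.-1 (face (n := n.+1) i x);
  face_degen_lt : forall n i j x, (i < j)%N -> (j <= n.+1)%N ->
     face i (degen (n := n.+1) j x) = degen j.-1 (face (n := n) i x);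
  face_degen_eq : forall n j x, (j <= n)%N ->
     face j (degen (n := n) j x) = x /\ face j.+1 (degen (n := n) j x) = x;
  face_degen_gt : forall n i j x, (j.+1 < i)%N -> (i <= n.+2)%N ->
     face i (degen (n := n.+1) j x) = degen j (face (n := n) i.-1 x);
  degen_degen : forall n i j x, (i <= j)%N -> (j <= n)%N ->
     degen i (degen (n := n) j x) = degen j.+1 (degen (n := n) i x)
}.

Record SMap (X Y : SSet) := {
  smap :> forall n : nat, X n -> Y n;
  smap_face : forall n i (x : X n.+1), (i <= n.+1)%N -> smap (face i x) = face i (smap x);
  smap_degen : forall n i (x : X n), (i <= n)%N -> smap (degen i x) = degen i (smap x)
}.

Definition smap_eq (X Y : SSet) (f g : SMap X Y) : Prop :=
  forall n (x : X n), f n x = g n x.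

Definition sapply (X Y Z : SSet) (g : SMap Y Z) (f : SMap X Y) n (x : X n) : Z n :=
  g n (f n x).

Definition is_automorphism (X : SSet) (f : SMap X X) : Prop :=
  exists g : SMap X X, forall n (x : X n), g n (f n x) = x /\ f n (g n x) = x.

Section Mackey.
Context {disp : Order.disp_t} {P : meetSemilatticeType disp}.

(* filtered meet-semilattice: a degree function strictly increasing along < *)
Definition filtration (d : P -> nat) : Prop := forall i j : P, i < j -> (d i < d j)%N.

Context (F : P -> SSet).

Definition is_functor (Fm : forall j i : P, j <= i -> SMap (F j) (F i)) : Prop :=
  (forall i (h : i <= i) n (x : F i n), Fm _ _ h n x = x) /\
  (forall j k i (hjk : j <= k) (hki : k <= i) (hji : j <= i) n (x : F j n),
      Fm _ _ hki n (Fm _ _ hjk n x) = Fm _ _ hji n x).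

(* Weak Mackey functor with quasi-unit: maps G(j<=i) : F i -> F j with G(i<=i) = id,
   and endomorphisms alpha(i,j,k) of F j, beta(i,j,k) of F (k /\ j), satisfying the
   double-coset-type identities for j < i, k < i; quasi-unit: alpha(i,j,j) automorphism. *)
Definition weak_Mackey_quasi_unit
    (Fm : forall j i : P, j <= i -> SMap (F j) (F i))
    (Gm : forall j i : P, j <= i -> SMap (F i) (F j)) : Prop :=
  (forall i (h : i <= i) n (x : F i n), Gm _ _ h n x = x) /\
  exists (alpha : forall i j k : P, SMap (F j) (F j))
         (beta : forall i j k : P, SMap (F (k `&` j)) (F (k `&` j))),
    (forall i j k : P, j < i -> k < i ->
       forall (hji : j <= i) (hki : k <= i) (h1 : k `&` j <= j) (h2 : k `&` j <= k)
              n (x : F k n),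
         Gm _ _ hji n (Fm _ _ hki n x) = alpha i j k n (Fm _ _ h1 n (Gm _ _ h2 n x)) /\
         alpha i j k n (Fm _ _ h1 n (Gm _ _ h2 n x)) = Fm _ _ h1 n (beta i j k n (Gm _ _ h2 n x))) /\
    (forall i j : P, j < i -> is_automorphism (alpha i j j)).

(* Degree-n part of colim_{P_{<i}} F, computed (as for any colimit of simplicial sets)
   degreewise: pairs (j, x) with j < i and x in F(j)_n, modulo the equivalence relation
   generated by (j, x) ~ (k, F(j<=k) x). *)
Record cocell (i : P) (n : nat) := Cocell { cj : P; clt : cj < i; cx : F cj n }.

Definition colim_step (Fm : forall j i : P, j <= i -> SMap (F j) (F i)) i n
    (a b : cocell i n) : Prop :=
  exists h : cj a <= cj b, Fm _ _ h n (cx a) = cx b.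

Definition colim_rel Fm i n := clos_refl_sym_trans _ (@colim_step Fm i n).

Definition colim_map (Fm : forall j i : P, j <= i -> SMap (F j) (F i)) i n
    (a : cocell i n) : F i n := Fm (cj a) i (ltW (clt a)) n (cx a).

(* Reedy cofibrancy: the natural map from the colimit is degreewise injective,
   i.e. injective on equivalence classes. *)
Definition cofibrant (Fm : forall j i : P, j <= i -> SMap (F j) (F i)) : Prop :=
  forall (i : P) (n : nat) (a b : cocell i n),
    colim_map Fm a = colim_map Fm b -> colim_rel Fm a b.

End Mackey.

(* Mackey's identity with k = j reads G(j<i) F(j<i) = alpha(i,j,j), so the quasi-unit makes
   every F(j<i) injective and every G(m<=k) F(m<=k) surjective (for m = k it is the identity).
   Given F(j<i) x = F(k<i) y, put m = k `&` j and lift G(m<=k) y along G(m<=k) F(m<=k) to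
   some u in F(m).  Mackey's identity applied to y and to F(m<=k) u gives
   G(j<i) F(j<i) x = G(j<i) F(j<i) F(m<=j) u, hence x = F(m<=j) u, and then injectivity of
   F(k<i) gives y = F(m<=k) u.  Thus (j, x) and (k, y) are identified in the colimit through
   (m, u). *)

From mathcomp Require Import all_boot all_order.
From Stdlib Require Import Relations.

Import Order.Theory.
Local Open Scope order_scope.

Section QuasiUnitCofibrant.

Context {disp : Order.disp_t} {P : meetSemilatticeType disp} {F : P -> SSet}.
Context {Fm : forall j i : P, j <= i -> SMap (F j) (F i)}.
Context {Gm : forall j i : P, j <= i -> SMap (F i) (F j)}.
Context {alpha : forall i j k : P, SMap (F j) (F j)}.
Arguments Fm {j i}.
Arguments Gm {j i}.

Hypothesis Fm_id : forall i (h : i <= i) n (x : F i n), Fm h n x = x.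
Hypothesis Fm_comp : forall {j k i} (hjk : j <= k) (hki : k <= i) (hji : j <= i) n (x : F j n),
  Fm hki n (Fm hjk n x) = Fm hji n x.
Hypothesis Gm_id : forall i (h : i <= i) n (x : F i n), Gm h n x = x.
Hypothesis Mackey : forall {i j k : P}, j < i -> k < i ->
  forall (hji : j <= i) (hki : k <= i) (h1 : k `&` j <= j) (h2 : k `&` j <= k) n (x : F k n),
    Gm hji n (Fm hki n x) = alpha i j k n (Fm h1 n (Gm h2 n x)).
Hypothesis quasi_unit : forall {i j : P}, j < i -> is_automorphism (alpha i j j).

Lemma Fm_Gm_eq (p q : P) (h1 h2 : p <= q) n (x : F q n) : p = q -> Fm h1 n (Gm h2 n x) = x.
Proof. by move=> epq; subst p; rewrite Gm_id Fm_id. Qed.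

Lemma Gm_Fm_lt {j i} (hji : j < i) (h1 h2 : j <= i) n (x : F j n) :
  Gm h1 n (Fm h2 n x) = alpha i j j n x.
Proof. by rewrite (Mackey hji hji _ _ (leIl j j) (leIl j j)) Fm_Gm_eq ?meetxx. Qed.

Lemma Gm_Fm_lt_inj {j i} (hji : j < i) (h1 h2 : j <= i) n :
  injective (fun x : F j n => Gm h1 n (Fm h2 n x)).
Proof.
move=> x y /=; rewrite !(Gm_Fm_lt hji) => exy.
have [g gK] := quasi_unit hji.
by rewrite -(proj1 (gK n x)) exy (proj1 (gK n y)).
Qed.

Lemma Fm_lt_inj {j i} (hji : j < i) (h : j <= i) n : injective (Fm h n).
Proof. by move=> x y exy; apply: (Gm_Fm_lt_inj hji h h); rewrite /= exy. Qed.

Lemma Gm_Fm_surj {m k} (h1 h2 : m <= k) {n} (v : F m n) : exists u, Gm h1 n (Fm h2 n u) = v.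
Proof.
have [emk | nemk] := eqVneq m k.
  by subst m; exists v; rewrite Fm_id Gm_id.
have ltmk : m < k by rewrite lt_neqAle nemk h1.
have [g gK] := quasi_unit ltmk.
by exists (g n v); rewrite (Gm_Fm_lt ltmk) (proj2 (gK n v)).
Qed.

Lemma Fm_eq_factor_meet {j k i} (hj : j < i) (hk : k < i) (hji : j <= i) (hki : k <= i)
    n (x : F j n) (y : F k n) :
  Fm hji n x = Fm hki n y ->
  exists u, Fm (leIr j k) n u = x /\ Fm (leIl k j) n u = y.
Proof.
move=> exy; have hmi : k `&` j <= i by apply: le_trans (leIr j k) hji.
have [u Gu] := Gm_Fm_surj (leIl k j) (leIl k j) (Gm (leIl k j) n y).
have xu : Fm (leIr j k) n u = x.
  apply: (Gm_Fm_lt_inj hj hji hji) => /=.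
  rewrite exy (Fm_comp _ hji hmi) -(Fm_comp (leIl k j) hki hmi).
  by rewrite !(Mackey hj hk hji hki (leIr j k) (leIl k j)) Gu.
exists u; split=> //; apply: (Fm_lt_inj hk hki).
by rewrite -exy -xu !Fm_comp.
Qed.

Lemma cofibrant_of_quasi_unit : cofibrant (@Fm).
Proof.
move=> i n [j hj x] [k hk y]; rewrite /colim_map /= => /Fm_eq_factor_meet.
case/(_ hj hk) => u [xu yu].
have hmi : k `&` j < i by apply: le_lt_trans (leIr j k) hj.
apply: (rst_trans _ _ _ (Cocell hmi u)).
  by apply/rst_sym/rst_step; exists (leIr j k).
by apply: rst_step; exists (leIl k j).
Qed.

End QuasiUnitCofibrant.

Theorem lemma3p8 (disp : Order.disp_t) (P : meetSemilatticeType disp)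
  (d : P -> nat) (hd : filtration d)
  (F : P -> SSet)
  (Fm : forall j i : P, j <= i -> SMap (F j) (F i))
  (Gm : forall j i : P, j <= i -> SMap (F i) (F j))
  (hF : is_functor Fm)
  (hM : weak_Mackey_quasi_unit Fm Gm) :
  cofibrant Fm.
Proof.
case: hF => Fm_id Fm_comp; case: hM => Gm_id [alpha [beta [Mackey quasi_unit]]].
apply: (cofibrant_of_quasi_unit Fm_id Fm_comp Gm_id _ quasi_unit).
by move=> i j k hj hk *; exact: proj1 (Mackey i j k hj hk _ _ _ _ _ _).
Qed.
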